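(* Let $F_1,\dots,F_n$ be groups and let $F=F_1\times\dots\times F_n$ act on a set $X$. Let $x\in X$, let $\mathrm{Stab}(x)$ be its stabilizer in $F$, and $S_i=\mathrm{Stab}(x)\cap F_i$. Assume $\mathrm{Stab}(x)\trianglelefteq F$ (so $S_i\trianglelefteq F_i$). Let $Z(F_i/S_i)$ be the center of $F_i/S_i$ and $Q_i=(F_i/S_i)/Z(F_i/S_i)$. Then the natural epimorphism $F_1\times\dots\times F_n\to Q_1\times\dots\times Q_n$ factors through an epimorphism $F/\mathrm{Stab}(x)\twoheadrightarrow Q_1\times\dots\times Q_n$. In particular, if all groups $F_i/S_i$ are non-abelian, then each $Q_i$ is non-trivial and $\#(F\cdot x)=\#(F/\mathrm{Stab}(x))\geq 2^n$. *)

From mathcomp Require Import all_boot.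
From Stdlib Require ClassicalEpsilon.
Import ClassicalEpsilon (constructive_indefinite_description).

Set Implicit Arguments.
Unset Strict Implicit.
Unset Printing Implicit Defensive.

Record magma := Magma {
  car :> Type;
  gmul : car -> car -> car;
  gone : car;
  ginv : car -> car }.
Arguments gone {m}.

Definition is_group (G : magma) : Prop :=
  (forall a b c : G, gmul a (gmul b c) = gmul (gmul a b) c) /\
  (forall a : G, gmul gone a = a) /\ (forall a : G, gmul a gone = a) /\
  (forall a : G, gmul (ginv a) a = gone) /\ (forall a : G, gmul a (ginv a) = gone).

Definition is_hom (G H : magma) (f : G -> H) : Prop :=
  forall a b : G, f (gmul a b) = gmul (f a) (f b).

Definition surjective (A B : Type) (f : A -> B) : Prop :=
  forall b : B, exists a : A, f a = b.

Definition is_subgroup (G : magma) (N : G -> Prop) : Prop :=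
  N gone /\ (forall a b, N a -> N b -> N (gmul a b)) /\ (forall a, N a -> N (ginv a)).

Definition is_normal (G : magma) (N : G -> Prop) : Prop :=
  is_subgroup N /\ forall g h : G, N h -> N (gmul (gmul g h) (ginv g)).

Definition commutative_group (G : magma) : Prop :=
  forall a b : G, gmul a b = gmul b a.

Definition center (G : magma) : G -> Prop :=
  fun z => forall g : G, gmul z g = gmul g z.

Definition prodM (n : nat) (F : 'I_n -> magma) : magma :=
  @Magma (forall i : 'I_n, F i)
    (fun g h i => gmul (g i) (h i)) (fun i => gone) (fun g i => ginv (g i)).

(* Quotient G/N: carrier = left cosets g N, operations through representatives
   (well defined, and a group, when N is normal). *)
Definition lcoset (G : magma) (N : G -> Prop) (g : G) : G -> Prop :=
  fun h => N (gmul (ginv g) h).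

Definition coset_car (G : magma) (N : G -> Prop) : Type :=
  {A : G -> Prop | exists g : G, A = lcoset N g}.

Definition qproj (G : magma) (N : G -> Prop) (g : G) : coset_car N :=
  exist _ (lcoset N g) (ex_intro _ g erefl).

Definition qrep (G : magma) (N : G -> Prop) (A : coset_car N) : G :=
  proj1_sig (constructive_indefinite_description _ (proj2_sig A)).

Definition quotM (G : magma) (N : G -> Prop) : magma :=
  @Magma (coset_car N)
    (fun A B => qproj N (gmul (qrep A) (qrep B)))
    (qproj N gone)
    (fun A => qproj N (ginv (qrep A))).

Definition is_action (G : magma) (X : Type) (act : G -> X -> X) : Prop :=
  (forall x, act gone x = x) /\
  (forall (g h : G) x, act (gmul g h) x = act g (act h x)).

Definition stab (G : magma) (X : Type) (act : G -> X -> X) (x : X) : G -> Prop :=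
  fun g => act g x = x.

Definition orbitX (G : magma) (X : Type) (act : G -> X -> X) (x : X) : X -> Prop :=
  fun y => exists g : G, y = act g x.

Definition stab_factor (n : nat) (F : 'I_n -> magma) (X : Type)
  (act : prodM F -> X -> X) (x : X) (i : 'I_n) : F i -> Prop :=
  fun a => exists g : prodM F,
    g i = a /\ (forall j, j <> i -> g j = gone) /\ stab act x g.

Arguments stab_factor {n F X} act x i _.

Definition FS (n : nat) (F : 'I_n -> magma) (X : Type)
  (act : prodM F -> X -> X) (x : X) (i : 'I_n) : magma :=
  quotM (stab_factor act x i).

Definition Qf (n : nat) (F : 'I_n -> magma) (X : Type)
  (act : prodM F -> X -> X) (x : X) (i : 'I_n) : magma :=
  quotM (@center (FS act x i)).

Definition natQ (n : nat) (F : 'I_n -> magma) (X : Type)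
  (act : prodM F -> X -> X) (x : X) (g : prodM F) : prodM (Qf act x) :=
  fun i => qproj (@center (FS act x i)) (qproj (stab_factor act x i) (g i)).

From mathcomp Require Import all_boot.
From Stdlib Require Import ProofIrrelevance FunctionalExtensionality.
From Stdlib Require Import PropExtensionality Classical.
From Stdlib Require ClassicalEpsilon.

(* The stabiliser Stab(x) is normal, so for s in Stab(x) and c in F_i the
   commutator [c, s] lies in Stab(x) and in F_i, i.e. in S_i. Hence the i-th
   component of s is central modulo S_i, and the natural epimorphism
   F -> Q_1 x ... x Q_n kills Stab(x); it therefore factors through F/Stab(x).
   If F_i/S_i is non-abelian then Q_i is non-trivial, so the product of the Q_i
   contains the 2^n elements with components in {1, q_i}; lifting them to
   F/Stab(x), which is in bijection with the orbit, gives 2^n orbit points. *)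

Set Implicit Arguments.
Unset Strict Implicit.
Unset Printing Implicit Defensive.

Local Notation cid := ClassicalEpsilon.constructive_indefinite_description.
Local Notation "a ** b" := (gmul a b) (at level 40, left associativity).

Section GroupTheory.

Variables (G : magma) (HG : is_group G).

Lemma mulgA (a b c : G) : a ** (b ** c) = a ** b ** c.
Proof. by case: HG. Qed.

Lemma mul1g (a : G) : gone ** a = a.
Proof. by case: HG => _ []. Qed.

Lemma mulg1 (a : G) : a ** gone = a.
Proof. by case: HG => _ [_ []]. Qed.

Lemma mulVg (a : G) : ginv a ** a = gone.
Proof. by case: HG => _ [_ [_ []]]. Qed.

Lemma mulgV (a : G) : a ** ginv a = gone.
Proof. by case: HG => _ [_ [_ []]]. Qed.

Lemma mulKg (a b : G) : ginv a ** (a ** b) = b.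
Proof. by rewrite mulgA mulVg mul1g. Qed.

Lemma mulKVg (a b : G) : a ** (ginv a ** b) = b.
Proof. by rewrite mulgA mulgV mul1g. Qed.

Lemma mulgK (a b : G) : b ** a ** ginv a = b.
Proof. by rewrite -mulgA mulgV mulg1. Qed.

Lemma invg_eq (a b : G) : a ** b = gone -> ginv a = b.
Proof. by move=> ab1; rewrite -[ginv a]mulg1 -ab1 mulKg. Qed.

Lemma invgK (a : G) : ginv (ginv a) = a.
Proof. by apply: invg_eq; rewrite mulVg. Qed.

Lemma invgM (a b : G) : ginv (a ** b) = ginv b ** ginv a.
Proof. by apply: invg_eq; rewrite -mulgA mulKVg mulgV. Qed.

Lemma invg1 : ginv (gone : G) = gone.
Proof. by apply: invg_eq; rewrite mul1g. Qed.

Lemma mulgI (a b c : G) : a ** b = a ** c -> b = c.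
Proof. by move=> E; rewrite -(mulKg a b) E mulKg. Qed.

Lemma center_normal : is_normal (@center G).
Proof.
split; [split; [|split]|].
- by move=> g; rewrite mul1g mulg1.
- by move=> a b za zb g; rewrite -mulgA zb mulgA za -mulgA.
- by move=> a za g; apply: (@mulgI a); rewrite mulKVg mulgA za mulgK.
- by move=> g h zh z; rewrite -(zh g) mulgK.
Qed.

Lemma not_commutative_center : ~ commutative_group G -> exists a : G, ~ center a.
Proof.
move=> ncomm; apply: NNPP => allc; apply: ncomm => a b.
by apply: NNPP => nab; apply: allc; exists a => za; apply: nab.
Qed.

End GroupTheory.

Ltac gnorm HG := do 4 rewrite ?(invgM HG) ?(invgK HG) ?(invg1 HG) -?(mulgA HG)
  ?(mulKg HG) ?(mulKVg HG) ?(mul1g HG) ?(mulgV HG) ?(mulVg HG) ?(mulg1 HG).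

Section Homomorphisms.

Variables (G H : magma) (HG : is_group G) (HH : is_group H).
Variables (f : G -> H) (f_hom : is_hom f).

Lemma hom1 : f gone = gone.
Proof. by apply: (@mulgI _ HH (f gone)); rewrite -f_hom (mulg1 HG) (mulg1 HH). Qed.

Lemma homV (a : G) : f (ginv a) = ginv (f a).
Proof. by apply/esym/(invg_eq HH); rewrite -f_hom (mulgV HG) hom1. Qed.

Lemma normal_preim (N : H -> Prop) : is_normal N -> is_normal (fun a => N (f a)).
Proof.
move=> [[N1 [NM NV]] Nc]; split; [split; [|split]|].
- by rewrite /= hom1.
- by move=> a b Na Nb; rewrite f_hom; apply: NM.
- by move=> a Na; rewrite homV; apply: NV.
- by move=> g h Nh; rewrite !f_hom homV; apply: Nc.
Qed.

End Homomorphisms.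

Section Quotient.

Variables (G : magma) (HG : is_group G) (N : G -> Prop).

Lemma qrepK (A : coset_car N) : qproj N (qrep A) = A.
Proof.
rewrite /qrep; case: (cid _ _) => g Ag.
by apply: (eq_sig_hprop (fun _ => proof_irrelevance _)); rewrite /= Ag.
Qed.

Lemma qproj_surj (A : coset_car N) : exists g, A = qproj N g.
Proof. by exists (qrep A); rewrite qrepK. Qed.

Section Subgroup.

Hypothesis HN : is_subgroup N.

Lemma subgroup_invMg (a b : G) : N (ginv a ** b) -> N (ginv b ** a).
Proof. by case: HN => _ [_ NV] /NV; rewrite (invgM HG) (invgK HG). Qed.

Lemma qproj_eqP (g h : G) : qproj N g = qproj N h <-> N (ginv g ** h).
Proof.
have [_ [NM _]] := HN; split.
- move=> /(f_equal (@proj1_sig _ _)) /= E.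
  have hh : lcoset N h h by rewrite /lcoset (mulVg HG); case: HN.
  by rewrite -E in hh.
- move=> Ngh; apply: (eq_sig_hprop (fun _ => proof_irrelevance _)) => /=.
  apply: functional_extensionality => z; apply: propositional_extensionality.
  rewrite /lcoset; split => Nz.
  + have -> : ginv h ** z = (ginv h ** g) ** (ginv g ** z) by gnorm HG.
    by apply: NM => //; apply: subgroup_invMg.
  + have -> : ginv g ** z = (ginv g ** h) ** (ginv h ** z) by gnorm HG.
    exact: NM.
Qed.

Lemma qrep_rel (g : G) : N (ginv g ** qrep (qproj N g)).
Proof. by apply: subgroup_invMg; apply/qproj_eqP; rewrite qrepK. Qed.

End Subgroup.

Section Normal.

Hypothesis HN : is_normal N.

Let HNs : is_subgroup N := proj1 HN.

Lemma qproj_eq1 (g : G) : qproj N g = (gone : quotM N) <-> N g.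
Proof.
have E : N (ginv gone ** g) <-> N g by rewrite (invg1 HG) (mul1g HG).
change (qproj N g = qproj N gone <-> N g); rewrite -E -(qproj_eqP HNs).
by split=> /esym.
Qed.

Lemma qprojM : @is_hom G (quotM N) (qproj N).
Proof.
move=> g h; have [[_ [NM _]] Nc] := HN.
apply/(qproj_eqP HNs).
have Ng := qrep_rel HNs g; have Nh := qrep_rel HNs h.
set rg := qrep _ in Ng *; set rh := qrep _ in Nh *.
by have := NM _ _ (Nc (ginv h) _ Ng) Nh; gnorm HG.
Qed.

Lemma qprojV (g : G) : @ginv (quotM N) (qproj N g) = qproj N (ginv g).
Proof.
apply/(qproj_eqP HNs).
by have := proj2 HN g _ (qrep_rel HNs g); gnorm HG.
Qed.

Lemma quotM_group : is_group (quotM N).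
Proof.
have E1 : (gone : quotM N) = qproj N gone by [].
split; [|split; [|split; [|split]]].
- move=> A B C; case: (qproj_surj A) => a ->; case: (qproj_surj B) => b ->.
  by case: (qproj_surj C) => c ->; rewrite -!qprojM (mulgA HG).
- by move=> A; case: (qproj_surj A) => a ->; rewrite E1 -qprojM (mul1g HG).
- by move=> A; case: (qproj_surj A) => a ->; rewrite E1 -qprojM (mulg1 HG).
- by move=> A; case: (qproj_surj A) => a ->; rewrite E1 qprojV -qprojM (mulVg HG).
- by move=> A; case: (qproj_surj A) => a ->; rewrite E1 qprojV -qprojM (mulgV HG).
Qed.

Lemma qproj_center (a : G) :
  (forall c : G, N (ginv c ** ginv a ** c ** a)) -> @center (quotM N) (qproj N a).
Proof.
move=> Nac C; case: (qproj_surj C) => c ->.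
by rewrite -!qprojM; apply/(qproj_eqP HNs); have := Nac c; gnorm HG.
Qed.

Variables (H : magma) (HH : is_group H) (f : G -> H).
Hypotheses (f_hom : is_hom f) (f_ker : forall s, N s -> f s = gone).

Definition quot_lift (A : quotM N) : H := f (qrep A).

Lemma quot_lift_qproj (g : G) : quot_lift (qproj N g) = f g.
Proof.
have Ng := qrep_rel HNs g.
by rewrite /quot_lift -[qrep _](mulKVg HG g) f_hom (f_ker Ng) (mulg1 HH).
Qed.

Lemma quot_lift_hom : is_hom quot_lift.
Proof.
move=> A B; case: (qproj_surj A) => a ->; case: (qproj_surj B) => b ->.
by rewrite -qprojM !quot_lift_qproj f_hom.
Qed.

Lemma quot_lift_surj : surjective f -> surjective quot_lift.
Proof.
by move=> f_surj h; case: (f_surj h) => g <-; exists (qproj N g); apply: quot_lift_qproj.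
Qed.

End Normal.

End Quotient.

Lemma quot_center_nontrivial (G : magma) (HG : is_group G) :
  ~ commutative_group G -> exists q : quotM (@center G), q <> gone.
Proof.
case/not_commutative_center => a nza; exists (qproj _ a).
by move/(qproj_eq1 HG (center_normal HG)).
Qed.

Section OrbitStabiliser.

Variables (G : magma) (HG : is_group G) (X : Type) (act : G -> X -> X).
Hypotheses (Hact : is_action act) (x : X).

Lemma stab_subgroup : is_subgroup (stab act x).
Proof.
have [act1 actM] := Hact; split; [|split]; rewrite /stab.
- exact: act1.
- by move=> a b ax bx; rewrite actM bx ax.
- by move=> a ax; rewrite -{1}ax -actM (mulVg HG) act1.
Qed.

Lemma orbit_quot_bijective :
  exists f : {y : X | orbitX act x y} -> quotM (stab act x), bijective f.
Proof.
have [act1 actM] := Hact.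
pose f (y : {y : X | orbitX act x y}) := qproj (stab act x) (proj1_sig (cid _ (proj2_sig y))).
pose g (A : quotM (stab act x)) : {y : X | orbitX act x y} :=
  exist _ (act (qrep A) x) (ex_intro _ (qrep A) erefl).
exists f, g.
- move=> [y y_orb]; apply: (eq_sig_hprop (fun _ => proof_irrelevance _)).
  rewrite /f /g /=; case: (cid _ _) => h /= ->.
  have := qrep_rel HG stab_subgroup h; rewrite /stab => E.
  by rewrite -[qrep _](mulKVg HG h) actM E.
- move=> A; rewrite /f /g /=; case: (cid _ _) => h /= E.
  rewrite -(qrepK A); apply/(qproj_eqP HG stab_subgroup).
  by rewrite /stab actM E -actM (mulVg HG) act1.
Qed.

End OrbitStabiliser.

Section Product.

Variables (n : nat) (F : 'I_n -> magma) (HF : forall i, is_group (F i)).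

Lemma prodM_group : is_group (prodM F).
Proof.
split; [|split; [|split; [|split]]] => *; apply: functional_extensionality_dep => i /=.
- by rewrite (mulgA (HF i)).
- by rewrite (mul1g (HF i)).
- by rewrite (mulg1 (HF i)).
- by rewrite (mulVg (HF i)).
- by rewrite (mulgV (HF i)).
Qed.

Definition prod_embed (i : 'I_n) (a : F i) : prodM F :=
  fun j => if i =P j is ReflectT e then eq_rect i F a j e else gone.

Lemma prod_embed_at (i : 'I_n) (a : F i) : prod_embed a i = a.
Proof. by rewrite /prod_embed; case: (i =P i) => [e|//]; rewrite (eq_axiomK e). Qed.

Lemma prod_embed_off (i j : 'I_n) (a : F i) : j <> i -> prod_embed a j = gone.
Proof. by move=> ji; rewrite /prod_embed; case: (i =P j) => // ij; case: ji. Qed.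

Lemma prod_embed_hom (i : 'I_n) : is_hom (@prod_embed i).
Proof.
move=> a b; apply: functional_extensionality_dep => j /=.
case: (j =P i) => [->|ji]; first by rewrite !prod_embed_at.
by rewrite !prod_embed_off // (mul1g (HF j)).
Qed.

End Product.

Lemma prodM_pow2_inj (n : nat) (Q : 'I_n -> magma) :
  (forall i, exists q : Q i, q <> gone) -> exists f : 'I_(2 ^ n) -> prodM Q, injective f.
Proof.
move=> Qnt; pose q i := proj1_sig (cid _ (Qnt i)).
have q_nt i : q i <> gone := proj2_sig (cid _ (Qnt i)).
pose sel (b : {ffun 'I_n -> bool}) : prodM Q := fun i => if b i then q i else gone.
have sel_inj : injective sel.
  move=> b1 b2 E; apply/ffunP => i; have := f_equal (fun t : prodM Q => t i) E.
  by rewrite /sel; case: (b1 i); case: (b2 i) => // Ei; case: (q_nt i); rewrite Ei.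
have card_sel : 2 ^ n = #|{ffun 'I_n -> bool}| by rewrite card_ffun card_bool card_ord.
exists (fun k => sel (enum_val (cast_ord card_sel k))).
by move=> k1 k2 /sel_inj /enum_val_inj /cast_ord_inj.
Qed.

Lemma surjective_section (A B : Type) (f : A -> B) :
  surjective f -> exists s : B -> A, cancel s f.
Proof. by move=> f_surj; exists (fun b => proj1_sig (cid _ (f_surj b))) => b; case: (cid _ _). Qed.

Section StabiliserFactors.

Variables (n : nat) (F : 'I_n -> magma) (HF : forall i, is_group (F i)).
Variables (X : Type) (act : prodM F -> X -> X) (x : X).
Hypothesis Hnorm : is_normal (stab act x).

Let HP := prodM_group HF.

Lemma stab_factorE (i : 'I_n) (a : F i) :
  stab_factor act x i a <-> stab act x (prod_embed a).
Proof.
split=> [[g [gi [g1 gx]]]|ax]; last first.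
  by exists (prod_embed a); split; [exact: prod_embed_at | split=> [j|//]; exact: prod_embed_off].
suff -> : prod_embed a = g by [].
apply: functional_extensionality_dep => j.
case: (j =P i) => [ji|/[dup] ji /g1 ->]; last exact: prod_embed_off.
by subst j; rewrite prod_embed_at.
Qed.

Lemma stab_factor_normal (i : 'I_n) : is_normal (stab_factor act x i).
Proof.
have -> : stab_factor act x i = fun a => stab act x (prod_embed a).
  by apply: functional_extensionality => a; apply/propositional_extensionality/stab_factorE.
exact: (normal_preim (HF i) HP (prod_embed_hom HF (i:=i)) Hnorm).
Qed.

Lemma FS_group (i : 'I_n) : is_group (FS act x i).
Proof. exact: (quotM_group (HF i) (stab_factor_normal i)). Qed.

Lemma stab_component_central (s : prodM F) (i : 'I_n) :
  stab act x s -> @center (FS act x i) (qproj (stab_factor act x i) (s i)).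
Proof.
move=> sx; apply: (qproj_center (HF i) (stab_factor_normal i)) => c.
have [[_ [NM NV]] Nc] := Hnorm.
apply/stab_factorE.
have -> : prod_embed (ginv c ** ginv (s i) ** c ** s i)
          = ginv (prod_embed c) ** ginv s ** ginv (ginv (prod_embed c)) ** s.
  apply: functional_extensionality_dep => j /=.
  case: (j =P i) => [ji|ji]; first by subst j; rewrite !prod_embed_at (invgK (HF i)).
  by rewrite !prod_embed_off //; gnorm (HF j).
by apply: NM => //; apply/Nc/NV.
Qed.

Lemma natQ_hom : is_hom (natQ act x).
Proof.
move=> g h; apply: functional_extensionality_dep => i; rewrite /natQ /=.
rewrite (qprojM (HF i) (stab_factor_normal i)).
by rewrite (qprojM (FS_group i) (center_normal (FS_group i))).
Qed.

Lemma natQ_stab (s : prodM F) : stab act x s -> natQ act x s = gone.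
Proof.
move=> sx; apply: functional_extensionality_dep => i.
by apply/(qproj_eq1 (FS_group i) (center_normal (FS_group i)))/stab_component_central.
Qed.

Lemma natQ_surj : surjective (natQ act x).
Proof.
move=> q; exists (fun i => qrep (qrep (q i))).
by apply: functional_extensionality_dep => i; rewrite /natQ !qrepK.
Qed.

End StabiliserFactors.

Theorem mainTheorem18 (n : nat) (F : 'I_n -> magma)
  (HF : forall i, is_group (F i))
  (X : Type) (act : prodM F -> X -> X) (Hact : is_action act) (x : X)
  (Hnorm : is_normal (stab act x)) :
  (exists phi : quotM (stab act x) -> prodM (Qf act x),
      is_hom phi /\ surjective phi /\
      (forall g : prodM F, phi (qproj (stab act x) g) = natQ act x g)) /\
  ((forall i, ~ commutative_group (FS act x i)) ->
     (forall i, exists q : Qf act x i, q <> gone) /\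
     (exists f : {y : X | orbitX act x y} -> quotM (stab act x), bijective f) /\
     (exists f : 'I_(2 ^ n) -> {y : X | orbitX act x y}, injective f)).
Proof.
have HP := prodM_group HF.
have HQ : is_group (prodM (Qf act x)).
  by apply: prodM_group => i; apply/quotM_group/center_normal; apply: FS_group.
have natQ_morph := natQ_hom HF Hnorm; have natQ_ker := natQ_stab HF Hnorm.
pose phi : quotM (stab act x) -> prodM (Qf act x) := quot_lift (natQ act x).
have phi_surj : surjective phi :=
  quot_lift_surj HP Hnorm HQ natQ_morph natQ_ker (natQ_surj (x:=x)).
split.
  exists phi; split; first exact: (quot_lift_hom HP Hnorm HQ natQ_morph natQ_ker).
  by split=> // g; apply: (quot_lift_qproj HP Hnorm HQ natQ_morph natQ_ker).
move=> noncomm.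
have Q_nt i := quot_center_nontrivial (FS_group HF Hnorm i) (noncomm i).
have [orb orb_bij] := orbit_quot_bijective HP Hact x.
split=> //; split; first by exists orb.
have [e e_inj] := prodM_pow2_inj Q_nt.
have [s sK] := surjective_section phi_surj.
have [orb' _ orbK] := orb_bij.
by exists (orb' \o s \o e) => k1 k2 /(can_inj orbK) /(can_inj sK) /e_inj.
Qed.
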